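(* Let $X$ be a Polish space, $f:X\to\mathbb R$ a Baire-1 function and $a<b$ reals. Let $F\subseteq X$ be closed, $x\in X$ and $\xi<\omega_1$ with $x\in F^{(\xi)}_{f,a,b}$. Then there exists a countable compact set $K\subseteq F$ such that $x\in K^{(\xi)}_{f,a,b}$.
   Context: For closed $F\subseteq X$: $F'_{f,a,b}=\overline{F\cap[f<a]}\cap\overline{F\cap[f>b]}$, where $[f<a]=\{x:f(x)<a\}$, $[f>b]=\{x:f(x)>b\}$; iterated derivatives $F^{(0)}_{f,a,b}=F$, $F^{(\xi+1)}_{f,a,b}=(F^{(\xi)}_{f,a,b})'_{f,a,b}$, $F^{(\lambda)}_{f,a,b}=\bigcap_{\xi<\lambda}F^{(\xi)}_{f,a,b}$ for limit $\lambda$. *)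

From Stdlib Require Import Reals List.
Set Implicit Arguments.
Open Scope R_scope.

Section Defs.
Variables (X : Type) (d : X -> X -> R).

Definition is_metric : Prop :=
  (forall x y, 0 <= d x y) /\ (forall x y, d x y = 0 <-> x = y) /\
  (forall x y, d x y = d y x) /\ (forall x y z, d x z <= d x y + d y z).

Definition countable (A : X -> Prop) : Prop :=
  exists g : X -> nat, forall x y, A x -> A y -> g x = g y -> x = y.

Definition cauchy (u : nat -> X) : Prop :=
  forall eps, 0 < eps -> exists N, forall n m, (N <= n)%nat -> (N <= m)%nat -> d (u n) (u m) < eps.

Definition converges_to (u : nat -> X) (l : X) : Prop :=
  forall eps, 0 < eps -> exists N, forall n, (N <= n)%nat -> d (u n) l < eps.

Definition polish : Prop :=
  is_metric /\
  (forall u, cauchy u -> exists l, converges_to u l) /\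
  (exists D : X -> Prop, countable D /\
     forall x eps, 0 < eps -> exists y, D y /\ d x y < eps).

Definition closure (A : X -> Prop) (x : X) : Prop :=
  forall eps, 0 < eps -> exists y, A y /\ d x y < eps.

Definition closed (A : X -> Prop) : Prop := forall x, closure A x -> A x.

Definition open (U : X -> Prop) : Prop :=
  forall x, U x -> exists eps, 0 < eps /\ forall y, d x y < eps -> U y.

Definition mcompact (K : X -> Prop) : Prop :=
  forall (J : Type) (U : J -> X -> Prop), (forall j, open (U j)) ->
    (forall x, K x -> exists j, U j x) ->
    exists l : list J, forall x, K x -> exists j, In j l /\ U j x.

Definition continuous (g : X -> R) : Prop :=
  forall x eps, 0 < eps -> exists delta, 0 < delta /\
    forall y, d x y < delta -> Rabs (g y - g x) < eps.

Definition baire1 (f : X -> R) : Prop :=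
  exists fn : nat -> X -> R, (forall n, continuous (fn n)) /\
    forall x, Un_cv (fun n => fn n x) (f x).

Definition deriv (f : X -> R) (a b : R) (F : X -> Prop) : X -> Prop :=
  fun x => closure (fun y => F y /\ f y < a) x /\ closure (fun y => F y /\ f y > b) x.

(** Ordinals below omega_1 are represented as elements xi of a countable
    strict well-order (I, lt); xi stands for the order type of {j | lt j xi}. *)
Definition ctble_wellorder (I : Type) (lt : I -> I -> Prop) : Prop :=
  well_founded lt /\
  (forall i j k, lt i j -> lt j k -> lt i k) /\
  (forall i j, i = j \/ lt i j \/ lt j i) /\
  (exists g : I -> nat, forall i j, g i = g j -> i = j).

(** iterated derivative by well-founded recursion along lt:
    minimum -> F ; successor of k -> (F^(k))' ; limit -> intersection. *)
Definition iter_deriv (f : X -> R) (a b : R) (F : X -> Prop)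
  (I : Type) (lt : I -> I -> Prop) (wf : well_founded lt) : I -> X -> Prop :=
  Fix wf (fun _ => X -> Prop)
    (fun j rec x =>
       ((forall k, ~ lt k j) /\ F x)
       \/ (exists k (hk : lt k j), (forall m, lt m j -> m = k \/ lt m k) /\
             deriv f a b (rec k hk) x)
       \/ ((exists k, lt k j) /\ (forall k, lt k j -> exists m, lt k m /\ lt m j) /\
             forall k (hk : lt k j), rec k hk x)).

End Defs.
Arguments polish {X}. Arguments closed {X}. Arguments countable {X}.
Arguments mcompact {X}. Arguments baire1 {X}. Arguments iter_deriv {X} d f a b F {I} lt wf.
Arguments ctble_wellorder {I}.

From Stdlib Require Import Reals List Lra Lia Classical ClassicalEpsilon
  FunctionalExtensionality Cantor.
Open Scope R_scope.

(** We prove the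
    stronger, local statement that [K] can be taken inside any ball [B(x, r)],
    by well-founded induction on [xi]:
    - minimal [xi]: take [K = {x}];
    - successor [xi = k+1]: [x] is a limit of points [y_n] of [F^(k)] with
      [f y_n < a] (n even) resp. [f y_n > b] (n odd) and [d x y_n -> 0];
      induction gives countable compact [M_n ∋^(k) y_n] in [B(x, r/(n+1))];
    - limit [xi]: enumerate the (countably many) [k < xi] and take, for the
      [n]-th one, a countable compact [M_n] in [B(x, r/(n+1))] with [x ∈ M_n^(k)].
    In the last two cases [K = {x} ∪ ⋃ M_n]: a countable union of countable
    sets, and compact because the [M_n] shrink to [x].  Monotonicity of the
    derivative in the set transfers [y ∈ M_n^(k)] to [y ∈ K^(k)]. *)

Lemma radius_pos r n : 0 < r -> 0 < r / (INR n + 1).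
Proof. intros. apply Rdiv_lt_0_compat; auto. pose proof (pos_INR n); lra. Qed.

Lemma radius_le r n : 0 < r -> r / (INR n + 1) <= r.
Proof.
  intros. pose proof (pos_INR n). unfold Rdiv.
  rewrite <- (Rmult_1_r r) at 2. apply Rmult_le_compat_l; [lra|].
  rewrite <- Rinv_1. apply Rinv_le_contravar; lra.
Qed.

Lemma radius_eventually_lt r e : 0 < r -> 0 < e ->
  exists N, forall n, (N <= n)%nat -> r / (INR n + 1) < e.
Proof.
  intros Hr He. destruct (archimed_cor1 (e / r)) as [N [HN HN0]].
  { apply Rdiv_lt_0_compat; auto. }
  exists N. intros n Hn. apply le_INR in Hn. apply lt_INR in HN0. simpl in HN0.
  apply Rle_lt_trans with (r / INR N).
  - unfold Rdiv. apply Rmult_le_compat_l; [lra|]. apply Rinv_le_contravar; lra.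
  - unfold Rdiv. replace e with (r * (e / r)) by (field; lra).
    apply Rmult_lt_compat_l; lra.
Qed.

Section Countable.
Variable X : Type.

Lemma countable_nat_union (M : nat -> X -> Prop) :
  (forall n, countable (M n)) -> countable (fun y => exists n, M n y).
Proof.
  intros HM. destruct (choice _ HM) as [G HG].
  pose (idx := fun y => epsilon (inhabits 0%nat) (fun n => M n y)).
  exists (fun y => Cantor.to_nat (idx y, G (idx y) y)).
  intros y z Hy Hz E.
  apply (f_equal Cantor.of_nat) in E. rewrite !Cantor.cancel_of_to in E.
  injection E as Eidx EG.
  pose proof (epsilon_spec (inhabits 0%nat) (fun n => M n y) Hy) as Sy.
  pose proof (epsilon_spec (inhabits 0%nat) (fun n => M n z) Hz) as Sz.
  fold (idx y) in Sy. fold (idx z) in Sz. rewrite Eidx in Sy, EG.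
  exact (HG _ y z Sy Sz EG).
Qed.

Lemma countable_add_point (A : X -> Prop) x :
  countable A -> countable (fun y => y = x \/ A y).
Proof.
  intros [g Hg].
  exists (fun y => if excluded_middle_informative (y = x) then 0%nat else S (g y)).
  intros y z Hy Hz.
  destruct (excluded_middle_informative (y = x)) as [Ey|Ny];
  destruct (excluded_middle_informative (z = x)) as [Ez|Nz];
    intro E; try congruence.
  injection E as E. destruct Hy as [|Hy]; [contradiction|].
  destruct Hz as [|Hz]; [contradiction|]. auto.
Qed.
End Countable.

Section Metric.
Variables (X : Type) (d : X -> X -> R).

Definition ball_piece (F : X -> Prop) (x : X) (r : R) (K : X -> Prop) : Prop :=
  (forall y, K y -> F y /\ d x y < r) /\ countable K /\ mcompact d K.

Definition shrinking_union (x : X) (M : nat -> X -> Prop) : X -> Prop :=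
  fun y => y = x \/ exists n, M n y.

Lemma ball_piece_empty F x r : ball_piece F x r (fun _ => False).
Proof.
  split; [intros y []|split].
  - exists (fun _ => 0%nat). intros y z [].
  - intros J U _ _. exists nil. intros y [].
Qed.

Lemma mcompact_finite_family (M : nat -> X -> Prop) (J : Type) (U : J -> X -> Prop) N :
  (forall n, mcompact d (M n)) -> (forall j, open d (U j)) ->
  (forall n y, M n y -> exists j, U j y) ->
  exists l, forall n y, (n < N)%nat -> M n y -> exists j, In j l /\ U j y.
Proof.
  intros HM HU Hc. induction N as [|N [l Hl]].
  - exists nil. intros; lia.
  - destruct (HM N J U HU (Hc N)) as [l' Hl'].
    exists (l ++ l'). intros n y Hn Hy.
    destruct (Nat.eq_dec n N) as [->|Hne].
    + destruct (Hl' y Hy) as [j [Hj1 Hj2]]. exists j. split; auto. apply in_or_app; auto.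
    + destruct (Hl n y ltac:(lia) Hy) as [j [Hj1 Hj2]].
      exists j. split; auto. apply in_or_app; auto.
Qed.

(** Compact pieces shrinking to [x] have a compact union with [{x}]: the open
    set covering [x] swallows all but finitely many pieces. *)
Lemma shrinking_union_compact x r (M : nat -> X -> Prop) : 0 < r ->
  (forall n, mcompact d (M n)) -> (forall n y, M n y -> d x y < r / (INR n + 1)) ->
  mcompact d (shrinking_union x M).
Proof.
  intros Hr HM Hsmall J U HU Hc.
  destruct (Hc x (or_introl eq_refl)) as [j0 Hj0].
  destruct (HU j0 x Hj0) as [e [He Hball]].
  destruct (radius_eventually_lt r e Hr He) as [N HN].
  destruct (mcompact_finite_family M J U N HM HU
              (fun n y Hy => Hc y (or_intror (ex_intro _ n Hy)))) as [l Hl].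
  exists (j0 :: l). intros y [->|[n Hn]].
  - exists j0. split; simpl; auto.
  - destruct (Nat.lt_ge_cases n N) as [Hlt|Hge].
    + destruct (Hl n y Hlt Hn) as [j [Hj1 Hj2]]. exists j. split; simpl; auto.
    + exists j0. split; simpl; auto. apply Hball.
      pose proof (Hsmall n y Hn). pose proof (HN n Hge). lra.
Qed.

Lemma closure_of_frequent (A : X -> Prop) x r (P : nat -> Prop) : 0 < r ->
  (forall N, exists n, (N <= n)%nat /\ P n) ->
  (forall n, P n -> exists y, A y /\ d x y < r / (INR n + 1)) ->
  closure d A x.
Proof.
  intros Hr HP HA e He. destruct (radius_eventually_lt r e Hr He) as [N HN].
  destruct (HP N) as [n [Hn Pn]]. destruct (HA n Pn) as [y [Ay Hy]].
  exists y. split; auto. pose proof (HN n Hn). lra.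
Qed.

Hypothesis Hm : is_metric d.

Lemma ball_piece_widen F x y e r K :
  ball_piece F y e K -> d x y + e <= r -> ball_piece F x r K.
Proof.
  destruct Hm as [_ [_ [_ Htri]]]. intros [HK [Hc Hk]] Hle.
  split; [|split; auto]. intros z Hz. destruct (HK z Hz) as [Fz Hz'].
  split; auto. pose proof (Htri x y z). lra.
Qed.

Lemma ball_piece_shrinking_union F x r (M : nat -> X -> Prop) : F x -> 0 < r ->
  (forall n, ball_piece F x (r / (INR n + 1)) (M n)) ->
  ball_piece F x r (shrinking_union x M).
Proof.
  destruct Hm as [_ [Hdeq _]]. intros Fx Hr HM. split; [|split].
  - intros y [->|[n Hn]].
    + rewrite (proj2 (Hdeq x x) eq_refl). auto.
    + destruct (proj1 (HM n) y Hn) as [Fy Hy].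
      pose proof (radius_le r n Hr). split; auto. lra.
  - apply countable_add_point, countable_nat_union. intro n. apply (HM n).
  - apply shrinking_union_compact with r; auto.
    + intro n. apply (HM n).
    + intros n y Hy. apply (proj1 (HM n) y Hy).
Qed.
End Metric.
Arguments ball_piece {X}.
Arguments shrinking_union {X}.

Section Derivatives.
Variables (X : Type) (d : X -> X -> R) (f : X -> R) (a b : R)
  (I : Type) (lt : I -> I -> Prop) (Hwf : well_founded lt).

Lemma iter_deriv_eq (F : X -> Prop) j x :
  iter_deriv d f a b F lt Hwf j x <->
  (((forall k, ~ lt k j) /\ F x)
   \/ (exists k, lt k j /\ (forall m, lt m j -> m = k \/ lt m k) /\
          deriv d f a b (iter_deriv d f a b F lt Hwf k) x)
   \/ ((exists k, lt k j) /\ (forall k, lt k j -> exists m, lt k m /\ lt m j) /\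
          forall k, lt k j -> iter_deriv d f a b F lt Hwf k x)).
Proof.
  unfold iter_deriv at 1. rewrite Fix_eq.
  - split; intros [H|[[k [hk H]]|H]]; eauto.
  - intros j0 g h Hgh.
    replace g with h; [reflexivity|].
    apply functional_extensionality_dep; intro k.
    apply functional_extensionality_dep; intro p. symmetry; apply Hgh.
Qed.

Lemma closure_mono (A B : X -> Prop) : (forall y, A y -> B y) ->
  forall x, closure d A x -> closure d B x.
Proof. intros H x Hc e He. destruct (Hc e He) as [y [Hy1 Hy2]]. eauto. Qed.

Lemma deriv_mono (K L : X -> Prop) : (forall y, K y -> L y) ->
  forall x, deriv d f a b K x -> deriv d f a b L x.
Proof.
  intros HKL x [Hlow Hhigh].
  split; [revert Hlow | revert Hhigh]; apply closure_mono;
    intros y [Hy1 Hy2]; split; auto.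
Qed.

Lemma iter_deriv_mono (K L : X -> Prop) : (forall y, K y -> L y) ->
  forall j x, iter_deriv d f a b K lt Hwf j x -> iter_deriv d f a b L lt Hwf j x.
Proof.
  intros HKL j. induction j as [j IH] using (well_founded_ind Hwf).
  intros x Hx. apply iter_deriv_eq in Hx. apply iter_deriv_eq.
  destruct Hx as [[H1 H2]|[[k [hk [H1 H2]]]|[H1 [H2 H3]]]].
  - left; auto.
  - right; left. exists k. split; [exact hk | split; [exact H1 |]].
    eapply deriv_mono; [|exact H2]. apply IH; exact hk.
  - right; right. repeat split; auto.
Qed.

Lemma iter_deriv_sub (F : X -> Prop) : closed d F ->
  forall j x, iter_deriv d f a b F lt Hwf j x -> F x.
Proof.
  intros HF j. induction j as [j IH] using (well_founded_ind Hwf).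
  intros x Hx. apply iter_deriv_eq in Hx.
  destruct Hx as [[H1 H2]|[[k [hk [H1 [H2 H3]]]]|[[k hk] [H2 H3]]]].
  - auto.
  - apply HF. intros e He. destruct (H2 e He) as [y [[Hy1 _] Hy2]]. eauto.
  - eauto.
Qed.
End Derivatives.

Section Localization.
Variables (X : Type) (d : X -> X -> R) (Hm : is_metric d) (f : X -> R) (a b : R)
  (I : Type) (lt : I -> I -> Prop) (Hwf : well_founded lt) (F : X -> Prop).

Notation "F ^( k )" := (iter_deriv d f a b F lt Hwf k) (at level 2, format "F ^( k )").

Definition localizable (k : I) : Prop :=
  forall y, F^(k) y -> forall r, 0 < r ->
    exists K, ball_piece d F y r K /\ K^(k) y.

Lemma localize_near_point k (A : X -> Prop) x rho : localizable k ->
  (forall y, A y -> F^(k) y) -> closure d A x -> 0 < rho ->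
  exists M, ball_piece d F x rho M /\ exists y, A y /\ d x y < rho /\ M^(k) y.
Proof.
  intros Hloc HA Hcl Hrho.
  destruct (Hcl (rho / 2)) as [y [Ay Hxy]]; [lra|].
  destruct (Hloc y (HA y Ay) (rho / 2)) as [M [HM HMy]]; [lra|].
  exists M. split.
  - apply ball_piece_widen with y (rho / 2); auto; lra.
  - exists y. repeat split; auto; lra.
Qed.

Lemma successor_step k x r : localizable k ->
  deriv d f a b (F^(k)) x -> F x -> 0 < r ->
  exists K, ball_piece d F x r K /\ deriv d f a b (K^(k)) x.
Proof.
  intros Hloc [Hlow Hhigh] Fx Hr.
  set (side n := fun y => F^(k) y /\ (if Nat.even n then f y < a else f y > b)).
  assert (Hpieces : forall n, exists M, ball_piece d F x (r / (INR n + 1)) M /\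
            exists y, side n y /\ d x y < r / (INR n + 1) /\ M^(k) y).
  { intro n. apply localize_near_point.
    - exact Hloc.
    - intros y [Hy _]. exact Hy.
    - unfold side. destruct (Nat.even n); [exact Hlow | exact Hhigh].
    - apply radius_pos, Hr. }
  destruct (choice _ Hpieces) as [M HM].
  exists (shrinking_union x M). split.
  { apply ball_piece_shrinking_union; auto. intro n. exact (proj1 (HM n)). }
  assert (Hclose : forall (P : nat -> Prop) (B : X -> Prop),
            (forall N, exists n, (N <= n)%nat /\ P n) ->
            (forall n y, P n -> side n y -> B y) ->
            closure d (fun y => (shrinking_union x M)^(k) y /\ B y) x).
  { intros P B HP HB. apply closure_of_frequent with r P; auto.
    intros n Pn. destruct (proj2 (HM n)) as [y [Sy [Hxy HMy]]].
    exists y. split; [split|]; eauto.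
    eapply iter_deriv_mono; [|exact HMy]. intros z Hz. right. exists n. exact Hz. }
  split.
  - apply (Hclose (fun n => Nat.even n = true) (fun y => f y < a)).
    + intro N. exists (2 * N)%nat. split; [lia | apply Nat.even_even].
    + intros n y En [_ Hy]. rewrite En in Hy. exact Hy.
  - apply (Hclose (fun n => Nat.even n = false) (fun y => f y > b)).
    + intro N. exists (2 * N + 1)%nat. split; [lia | apply Nat.even_odd].
    + intros n y En [_ Hy]. rewrite En in Hy. exact Hy.
Qed.

Lemma limit_step (g : I -> nat) j x r : (forall i i', g i = g i' -> i = i') ->
  (forall k, lt k j -> localizable k) -> (forall k, lt k j -> F^(k) x) ->
  F x -> 0 < r ->
  exists K, ball_piece d F x r K /\ forall k, lt k j -> K^(k) x.
Proof.
  intros Hg Hloc Hx Fx Hr.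
  assert (Hpieces : forall n, exists M, ball_piece d F x (r / (INR n + 1)) M /\
            forall k, lt k j -> g k = n -> M^(k) x).
  { intro n. destruct (classic (exists k, lt k j /\ g k = n)) as [[k [hk Hgk]]|Hnone].
    - destruct (Hloc k hk x (Hx k hk) _ (radius_pos r n Hr)) as [M [HM HMx]].
      exists M. split; auto. intros k' hk' Hgk'.
      replace k' with k by (apply Hg; congruence). exact HMx.
    - exists (fun _ => False). split; [apply ball_piece_empty|].
      intros k hk Hgk. exfalso. eauto. }
  destruct (choice _ Hpieces) as [M HM].
  exists (shrinking_union x M). split.
  - apply ball_piece_shrinking_union; auto. intro n. exact (proj1 (HM n)).
  - intros k hk. apply iter_deriv_mono with (M (g k)).
    + intros y Hy. right. exists (g k). exact Hy.
    + apply (proj2 (HM (g k))); auto.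
Qed.

Theorem iter_deriv_localizable (g : I -> nat) : (forall i i', g i = g i' -> i = i') ->
  closed d F -> forall j, localizable j.
Proof.
  intros Hg HF j. induction j as [j IH] using (well_founded_ind Hwf).
  intros x Hx r Hr.
  pose proof (iter_deriv_sub X d f a b I lt Hwf F HF j x Hx) as Fx.
  apply iter_deriv_eq in Hx.
  destruct Hx as [[Hmin _]|[[k [hk [Hpred Hder]]]|[Hne [Hlim Hall]]]].
  - exists (shrinking_union x (fun _ _ => False)). split.
    + apply ball_piece_shrinking_union; auto. intro. apply ball_piece_empty.
    + apply iter_deriv_eq. left. split; [exact Hmin | left; reflexivity].
  - destruct (successor_step k x r (IH k hk) Hder Fx Hr) as [K [HK HKx]].
    exists K. split; auto. apply iter_deriv_eq. right; left. exists k. auto.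
  - destruct (limit_step g j x r Hg IH Hall Fx Hr) as [K [HK HKx]].
    exists K. split; auto. apply iter_deriv_eq. right; right. auto.
Qed.
End Localization.

Theorem lemma4p3 (X : Type) (d : X -> X -> R) (HX : polish d)
  (f : X -> R) (Hf : baire1 d f) (a b : R) (Hab : a < b)
  (F : X -> Prop) (HF : closed d F) (x : X)
  (I : Type) (lt : I -> I -> Prop) (Hwf : well_founded lt)
  (Hwo : ctble_wellorder lt) (xi : I)
  (Hx : iter_deriv d f a b F lt Hwf xi x) :
  exists K : X -> Prop, (forall y, K y -> F y) /\ countable K /\ mcompact d K /\
    iter_deriv d f a b K lt Hwf xi x.
Proof.
  destruct Hwo as [_ [_ [_ [g Hg]]]].
  destruct (iter_deriv_localizable X d (proj1 HX) f a b I lt Hwf F g Hg HF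
              xi x Hx 1 Rlt_0_1) as [K [[HKF [HKc HKm]] HKx]].
  exists K. repeat split; auto. intros y Hy. exact (proj1 (HKF y Hy)).
Qed.
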